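(* Let $0<k<n$ and let $\mathcal{F}=(\mathcal{F}_{n-k},\dots,\mathcal{F}_2,\mathcal{F}_1)$ be a Ferrers diagram of size $m$ embedded in a $k\times(n-k)$ box. Set $\mathcal{F}_0=k$. Then the number $\mathrm{ind}_m(\mathcal{F})$ of Ferrers diagrams of size $m$ embedded in a $k\times(n-k)$ box that precede $\mathcal{F}$ in the order defined below is \[\mathrm{ind}_m(\mathcal{F})=\sum_{j=1}^{n-k}\ \sum_{a=\mathcal{F}_j+1}^{\mathcal{F}_{j-1}} p\Bigl(a,\,n-k-j,\,m-\sum_{i=1}^{j-1}\mathcal{F}_i-a\Bigr).\]
   Context: A Ferrers diagram embedded in a $k\times(n-k)$ box is represented by an integer vector $(\mathcal{F}_{n-k},\dots,\mathcal{F}_1)$ with $0\le\mathcal{F}_{i+1}\le\mathcal{F}_i\le k$ for $1\le i\le n-k-1$, where $\mathcal{F}_i$ is the number of dots in the $i$-th column, columns numbered from right to left; its size is $\sum_i\mathcal{F}_i$. Order on diagrams of the same size: $\mathcal{F}<\widetilde{\mathcal{F}}$ if $\mathcal{F}_i>\widetilde{\mathcal{F}}_i$ for the least index $i$ with $\mathcal{F}_i\ne\widetilde{\mathcal{F}}_i$. $p(a,\eta,s)$ is the number of partitions of $s$ whose Ferrers diagram fits in an $a\times\eta$ box, with $p(a,\eta,0)=1$ and $p(a,\eta,s)=0$ if $s<0$ or $s>a\eta$. An empty inner sum is $0$. *)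

From mathcomp Require Import all_boot all_order all_algebra.
Set Implicit Arguments. Unset Strict Implicit. Unset Printing Implicit Defensive.
Import GRing.Theory Num.Theory.

(* A candidate diagram with c columns, each of height at most k:
   F i (i : 'I_c) is the number of dots in column i+1 (columns numbered
   from right to left, so F ord0 = F_1). *)
Definition diag (k c : nat) := {ffun 'I_c -> 'I_k.+1}.

Definition is_ferrers (k c : nat) (F : diag k c) : bool :=
  [forall i : 'I_c, forall j : 'I_c, (i <= j) ==> (val (F j) <= val (F i))].

Definition dsize (k c : nat) (F : diag k c) : nat := \sum_(i < c) val (F i).

Definition dlt (k c : nat) (F G : diag k c) : bool :=
  [exists i : 'I_c, [forall j : 'I_c, (j < i) ==> (F j == G j)]
                    && (val (G i) < val (F i))].

Definition ferrers_ind (k c m : nat) (F : diag k c) : nat :=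
  #|[set G : diag k c | [&& is_ferrers G, dsize G == m & dlt G F]]|.

(* p(a, eta, s): number of partitions of s whose Ferrers diagram fits in an
   a x eta box, i.e. Ferrers diagrams with eta columns of height <= a and
   s dots; 0 for negative s. *)
Definition pbox (a eta : nat) (s : int) : nat :=
  match s with
  | Posz s' => #|[set G : diag a eta | is_ferrers G && (dsize G == s')]|
  | Negz _ => 0
  end.

Definition fcol (k c : nat) (F : diag k c) (j : nat) : nat :=
  match j with
  | 0 => k
  | j'.+1 => oapp (fun i : 'I_c => val (F i)) 0 (insub j')
  end.

Arguments is_ferrers {k c} F.
Arguments dsize {k c} F.
Arguments dlt {k c} F G.
Arguments ferrers_ind {k c} m F.
Arguments fcol {k c} F j.

(* A diagram G preceding F agrees with F on columns 1, ..., j-1 and has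
   F_j < G_j = a for some j; since G_j <= G_{j-1} = F_{j-1}, the value a ranges
   over (F_j, F_{j-1}], and any such a works.  The remaining n-k-j columns of G
   then form an arbitrary Ferrers diagram of height at most a with
   m - (F_1 + ... + F_{j-1}) - a dots.  Reading diagrams as sequences of column
   heights, this classification becomes an induction on the number of columns,
   splitting on the height of the first column. *)

From mathcomp Require Import all_boot all_order all_algebra.
Import GRing.Theory Num.Theory.

Fixpoint boxseqs (k c : nat) : seq (seq nat) :=
  if c is c'.+1 then [seq x :: s | x <- iota 0 k.+1, s <- boxseqs k c']
  else [:: [::]].

Lemma boxseqsS k c :
  boxseqs k c.+1 = [seq x :: s | x <- iota 0 k.+1, s <- boxseqs k c].
Proof. by []. Qed.

Lemma count_boxseqsS (P : pred (seq nat)) k c :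
  count P (boxseqs k c.+1) =
  \sum_(0 <= x < k.+1) count (fun s => P (x :: s)) (boxseqs k c).
Proof.
rewrite boxseqsS count_flatten -map_comp sumnE big_map /index_iota subn0.
by apply: eq_bigr => x _ /=; rewrite count_map.
Qed.

Lemma mem_boxseqs k c s :
  (s \in boxseqs k c) = (size s == c) && all (geq k) s.
Proof.
elim: c s => [|c IH] [|x s] //; rewrite boxseqsS.
  by apply/allpairsP => -[[x s]] [].
apply/allpairsP/andP => [[[y t]] [hy ht [-> ->]]|[/eqP[hs] /andP[hx ht]]].
  by move: hy ht; rewrite mem_iota IH /= ltnS eqSS => -> /andP[-> ->].
by exists (x, s); rewrite mem_iota IH hs eqxx.
Qed.

Lemma uniq_boxseqs k c : uniq (boxseqs k c).
Proof.
elim: c => [|c IH] //; apply: allpairs_uniq => //; first exact: iota_uniq.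
by move=> [x s] [y t] _ _ /= [-> ->].
Qed.

Lemma count_boxseqs_bounded {y k} c (Q : pred (seq nat)) : y <= k ->
  count (fun s => all (geq y) s && Q s) (boxseqs k c) = count Q (boxseqs y c).
Proof.
move=> le_yk; elim: c Q => [|c IH] Q //; rewrite !count_boxseqsS.
rewrite (big_cat_nat _ (n := y.+1)) //= [X in _ + X]big1_seq ?addn0.
  apply: eq_big_nat => x /andP[_ lt_xy]; rewrite -(IH (fun s => Q (x :: s))).
  by apply: eq_count => s /=; rewrite -ltnS lt_xy.
move=> x /andP[_]; rewrite mem_iota => /andP[lt_yx _].
by rewrite (eq_count (a2 := pred0)) ?count_pred0 // => s /=; rewrite leqNgt lt_yx.
Qed.

Fixpoint precedes (s t : seq nat) : bool :=
  match s, t with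
  | x :: s', y :: t' => (y < x) || (x == y) && precedes s' t'
  | _, _ => false
  end.

Lemma precedesP s t : size s = size t ->
  reflect (exists i, [/\ i < size s,
                         forall j, j < i -> nth 0 s j = nth 0 t j
                       & nth 0 t i < nth 0 s i])
          (precedes s t).
Proof.
elim: s t => [|x s IH] [|y t] //= => [_|[hs]]; first by constructor => -[i []].
apply: (iffP orP) => [[lt_yx|/andP[/eqP-> /(IH _ hs)[i [hi hj hl]]]]|].
- by exists 0.
- by exists i.+1; split=> // -[|j] //= /hj.
case=> -[|i] [hi hj hl]; [by left | right].
by rewrite [x](hj 0) //= eqxx; apply/(IH _ hs); exists i; split=> // j /(hj j.+1).
Qed.

Definition pbox_seq (a eta : nat) (z : int) : nat :=
  count (fun u => pairwise geq u && (Posz (sumn u) == z)) (boxseqs a eta).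

Lemma eq_Posz_addn (x y : nat) (z : int) :
  (Posz (x + y) == z) = (Posz y == z - Posz x)%R.
Proof. by rewrite [_ == (z - _)%R]eq_sym subr_eq eq_sym PoszD addrC. Qed.

Lemma count_precedes_boxseqs c k (t : seq nat) (m : int) :
  size t = c -> all (geq k) t -> pairwise geq t ->
  count (fun s => [&& pairwise geq s, Posz (sumn s) == m & precedes s t])
        (boxseqs k c)
  = \sum_(j < c) \sum_((nth 0 t j).+1 <= a < (nth k (k :: t) j).+1)
       pbox_seq a (c - j.+1) (m - Posz (sumn (take j t)) - Posz a)%R.
Proof.
elim: c k t m => [|c IH] k [|y t] m //=; first by rewrite big_ord0 andbF.
move=> [sz_t] /andP[le_yk le_tk] /andP[ge_yt pw_t].
(* Split on the first entry x: if x < y then s never precedes t, if x > y it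
   does whatever the tail is (the tail is only bounded by x), and if x = y we
   recurse on the tail with bound y. *)
rewrite count_boxseqsS big_ord_recl /=.
rewrite (big_cat_nat _ (n := y.+1)) //= (big_cat_nat _ (m := 0) (n := y)) //=.
have below_y : \sum_(0 <= x < y) count (fun s => [&& pairwise geq (x :: s),
      Posz (sumn (x :: s)) == m & precedes (x :: s) (y :: t)]) (boxseqs k c) = 0.
  apply: big1_seq => x /andP[_]; rewrite mem_iota add0n subn0 => /andP[_ lt_xy].
  rewrite (eq_count (a2 := pred0)) ?count_pred0 // => s /=.
  by rewrite ltnNge (ltnW lt_xy) (ltn_eqF lt_xy) !andbF.
rewrite below_y add0n big_nat1 addnC; congr (_ + _).
  apply: eq_big_nat => x /andP[lt_yx le_xk]; rewrite subSS subn0 subr0 /pbox_seq.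
  rewrite -(count_boxseqs_bounded _ _ (le_xk : x <= k)); apply: eq_count => s /=.
  by rewrite lt_yx eq_Posz_addn andbT andbA.
rewrite ltnn eqxx /=.
rewrite (eq_count (a2 := fun s => all (geq y) s &&
    [&& pairwise geq s, Posz (sumn s) == (m - Posz y)%R & precedes s t])); last first.
  by move=> s /=; rewrite eq_Posz_addn !andbA.
rewrite (count_boxseqs_bounded _ _ le_yk) (IH y) //.
apply: eq_bigr => j _; rewrite add0n (@set_nth_default _ _ y k) /=; last first.
  by rewrite sz_t ltnS ltnW.
by apply: eq_bigr => a _; rewrite PoszD opprD addrA.
Qed.

Definition colseq k c (G : diag k c) : seq nat := [seq val (G i) | i <- enum 'I_c].
Arguments colseq {k c} G.

Lemma size_colseq k c (G : diag k c) : size (colseq G) = c.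
Proof. by rewrite size_map size_enum_ord. Qed.

Lemma nth_colseq k c (G : diag k c) (i : 'I_c) : nth 0 (colseq G) i = val (G i).
Proof. by rewrite (nth_map i) ?size_enum_ord // nth_ord_enum. Qed.

Lemma colseq_bounded k c (G : diag k c) : all (geq k) (colseq G).
Proof. by apply/allP => _ /mapP[i _ ->]; exact: (ltn_ord (G i)). Qed.

Lemma colseq_inj k c : injective (@colseq k c).
Proof. by move=> G H eGH; apply/ffunP => i; apply: val_inj; rewrite -!nth_colseq eGH. Qed.

Lemma card_diag_colseq k c (P : pred (seq nat)) :
  #|[set G : diag k c | P (colseq G)]| = count P (boxseqs k c).
Proof.
rewrite cardsE cardE /enum_mem size_filter -enumT.
rewrite (eq_count (a2 := preim colseq P)) // -count_map.
apply/permP/uniq_perm => [||s]; first by rewrite (map_inj_uniq (@colseq_inj k c)) enum_uniq.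
  exact: uniq_boxseqs.
rewrite mem_boxseqs; apply/mapP/andP => [[G _ ->]|[/eqP sz_s le_sk]].
  by rewrite size_colseq colseq_bounded.
exists [ffun i : 'I_c => (inord (nth 0 s i) : 'I_k.+1)]; first by rewrite mem_enum.
apply: (@eq_from_nth _ 0) => [|i]; rewrite ?size_colseq // sz_s => lt_ic.
rewrite -[i]/(nat_of_ord (Ordinal lt_ic)) nth_colseq ffunE /= inordK //.
by rewrite ltnS; apply: (all_nthP 0 le_sk); rewrite sz_s.
Qed.

Lemma is_ferrers_colseq k c (G : diag k c) : is_ferrers G = pairwise geq (colseq G).
Proof.
apply/forallP/(pairwiseP 0) => [H i j|H i].
  rewrite -!topredE /= size_colseq => lt_ic lt_jc lt_ij.
  move: (H (Ordinal lt_ic)) => /forallP/(_ (Ordinal lt_jc))/implyP/(_ (ltnW lt_ij)).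
  by rewrite -!nth_colseq.
apply/forallP => j; apply/implyP; rewrite leq_eqVlt => /orP[/eqP/val_inj-> //|lt_ij].
by rewrite -!nth_colseq; apply: H; rewrite // -topredE /= size_colseq.
Qed.

Lemma dsize_colseq k c (G : diag k c) : dsize G = sumn (colseq G).
Proof. by rewrite /dsize sumnE big_map big_enum. Qed.

Lemma dlt_colseq k c (G F : diag k c) : dlt G F = precedes (colseq G) (colseq F).
Proof.
apply/existsP/precedesP; rewrite ?size_colseq //.
  move=> [i /andP[/forallP eq_before lt_i]]; exists i; rewrite !nth_colseq.
  split=> // j lt_ji; have lt_jc := ltn_trans lt_ji (ltn_ord i).
  rewrite -[j]/(nat_of_ord (Ordinal lt_jc)) !nth_colseq.
  by move/implyP: (eq_before (Ordinal lt_jc)) => /(_ lt_ji)/eqP->.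
move=> [i [lt_ic eq_before lt_i]]; exists (Ordinal lt_ic).
rewrite -!nth_colseq lt_i andbT; apply/forallP => j; apply/implyP => lt_ji.
by apply/eqP/val_inj; rewrite /= -!nth_colseq eq_before.
Qed.

Lemma pbox_seqE a eta z : pbox a eta z = pbox_seq a eta z.
Proof.
rewrite /pbox_seq; case: z => [s|s] /=; last first.
  by rewrite (eq_count (a2 := pred0)) ?count_pred0 // => u; rewrite andbF.
rewrite -(card_diag_colseq _ _ (fun u => pairwise geq u && (sumn u == s))).
by apply: eq_card => G; rewrite !inE is_ferrers_colseq dsize_colseq.
Qed.

Lemma ferrers_ind_count k c m (F : diag k c) :
  ferrers_ind m F =
  count (fun s => [&& pairwise geq s, Posz (sumn s) == Posz m & precedes s (colseq F)])
        (boxseqs k c).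
Proof.
rewrite -card_diag_colseq; apply: eq_card => G.
by rewrite !inE is_ferrers_colseq dsize_colseq dlt_colseq eqz_nat.
Qed.

Lemma fcol_colseq k c (F : diag k c) j : j <= c -> fcol F j = nth k (k :: colseq F) j.
Proof.
case: j => [|j] //= lt_jc.
rewrite (@set_nth_default _ _ 0 k) ?size_colseq // insubT /=.
by rewrite -[j]/(nat_of_ord (Ordinal lt_jc)) nth_colseq.
Qed.

Lemma fcolS_colseq k c (F : diag k c) j : j < c -> fcol F j.+1 = nth 0 (colseq F) j.
Proof. by move=> lt_jc; rewrite fcol_colseq //= (@set_nth_default _ _ 0 k) ?size_colseq. Qed.

Lemma sumn_take (t : seq nat) j : sumn (take j t) = \sum_(0 <= i < j) nth 0 t i.
Proof.
elim: t j => [|x t IH] [|j]; try by rewrite big_geq.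
  by rewrite /= big1_seq // => i _; rewrite nth_nil.
by rewrite big_nat_recl //= IH.
Qed.

Lemma sum_fcol k c (F : diag k c) j : j <= c ->
  \sum_(1 <= i < j.+1) fcol F i = sumn (take j (colseq F)).
Proof.
move=> le_jc; rewrite big_add1 sumn_take; apply: eq_big_nat => i /andP[_ lt_ij].
exact/fcolS_colseq/(leq_trans lt_ij).
Qed.

Theorem theorem7 (n k m : nat) (F : diag k (n - k)) :
  (0 < k)%N -> (k < n)%N -> is_ferrers F -> dsize F = m ->
  ferrers_ind m F =
  (\sum_(1 <= j < (n - k).+1)
     \sum_((fcol F j).+1 <= a < (fcol F j.-1).+1)
        pbox a (n - k - j)
          (m%:Z - (\sum_(1 <= i < j) fcol F i)%N%:Z - a%:Z)%R)%N.
Proof.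
(* The identity holds for every Ferrers diagram F. *)
move=> _ _ ferrers_F _.
have pw_F : pairwise geq (colseq F) by rewrite -is_ferrers_colseq.
rewrite ferrers_ind_count count_precedes_boxseqs ?size_colseq ?colseq_bounded //.
rewrite big_add1 big_mkord; apply: eq_bigr => j _; have lt_jc := ltn_ord j.
rewrite fcolS_colseq // fcol_colseq ?sum_fcol ?(ltnW lt_jc) //.
by apply: eq_bigr => a _; rewrite pbox_seqE.
Qed.
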